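(* Let $\mathsf{M}_1,\mathsf{M}_2$ be two unbiased dichotomic qubit measurements, i.e. $\mathsf{M}_1(\pm1)=\frac12(I\pm\vec a\cdot\vec\sigma)$ and $\mathsf{M}_2(\pm1)=\frac12(I\pm\vec b\cdot\vec\sigma)$ with $\vec a,\vec b\in\mathbb{R}^3$, $\|\vec a\|,\|\vec b\|\leq1$. Then $\mathsf{M}_1$ and $\mathsf{M}_2$ are incompatible if and only if they are useful for $(2,2)$-QRAC, i.e. if and only if $$\frac{1}{8}\sum_{x,y=\pm1}\big\|\mathsf{M}_1(x)+\mathsf{M}_2(y)\big\|>\frac34 .$$
   Context: $\vec\sigma=(\sigma_1,\sigma_2,\sigma_3)$ are the Pauli matrices, $I$ the identity on $\mathbb{C}^2$, and $\|\cdot\|$ the operator norm. Two POVMs are compatible if there is a POVM $\mathsf{G}(x,y)$ whose marginals $\sum_y\mathsf{G}(x,y)$ and $\sum_x\mathsf{G}(x,y)$ are $\mathsf{M}_1(x)$ and $\mathsf{M}_2(y)$; otherwise incompatible. The left-hand side of the displayed inequality is the optimal average success probability $\bar P_{\rm qrac}(\mathsf{M}_1,\mathsf{M}_2)$ in the $(2,2)$ quantum random access code, and $3/4$ is the optimal classical $(2,2)$ random access code success probability. *)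

From HB Require Import structures.
From mathcomp Require Import all_boot all_order all_algebra.
From mathcomp Require Import complex.
From mathcomp Require Import boolp classical_sets reals.

Set Implicit Arguments.
Unset Strict Implicit.
Unset Printing Implicit Defensive.

Import Order.TTheory GRing.Theory Num.Theory.
Local Open Scope ring_scope.
Local Open Scope complex_scope.

Section QRAC.
Variable R : realType.
Local Notation C := R[i].

Definition sigma1 : 'M[C]_2 := \matrix_(i < 2, j < 2) (if i == j then 0 else 1).
Definition sigma2 : 'M[C]_2 :=
  \matrix_(i < 2, j < 2)
    (if i == j then 0 else if i == ord0 then - 'i else 'i).
Definition sigma3 : 'M[C]_2 :=
  \matrix_(i < 2, j < 2) (if i == j then (if i == ord0 then 1 else -1) else 0).

Definition dot_sigma (a : 'cV[R]_3) : 'M[C]_2 :=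
  (a ord0 ord0)%:C *: sigma1 + (a (inord 1) ord0)%:C *: sigma2
  + (a (inord 2) ord0)%:C *: sigma3.

Definition rnorm2 (a : 'cV[R]_3) : R := \sum_i (a i ord0) ^+ 2.

(* outcomes +1 / -1 are encoded by true / false *)
Definition sgn (x : bool) : R := if x then 1 else -1.

Definition dichot (a : 'cV[R]_3) (x : bool) : 'M[C]_2 :=
  (1 / 2 : C) *: (1%:M + (sgn x)%:C *: dot_sigma a).

Definition adj (A : 'M[C]_2) : 'M[C]_2 := (map_mx conjc A)^T.
Definition cadj (v : 'cV[C]_2) : 'rV[C]_2 := (map_mx conjc v)^T.

Definition psd (A : 'M[C]_2) : Prop :=
  adj A = A /\ forall v : 'cV[C]_2, 0 <= (cadj v *m A *m v) ord0 ord0.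

Definition povm (T : finType) (M : T -> 'M[C]_2) : Prop :=
  (forall x, psd (M x)) /\ \sum_x M x = 1%:M.

Definition compatible (M1 M2 : bool -> 'M[C]_2) : Prop :=
  exists G : bool * bool -> 'M[C]_2,
    povm G /\
    (forall x, \sum_y G (x, y) = M1 x) /\
    (forall y, \sum_x G (x, y) = M2 y).

Definition cnorm2 (v : 'cV[C]_2) : R :=
  \sum_i (complex.Re (v i ord0) ^+ 2 + complex.Im (v i ord0) ^+ 2).

Definition opnorm (A : 'M[C]_2) : R :=
  sup [set Num.sqrt (cnorm2 (A *m v)) | v in [set v | cnorm2 v = 1]].

End QRAC.

From Pilot Require Import Defs.
From HB Require Import structures.
From mathcomp Require Import all_boot all_order all_algebra.
From mathcomp Require Import complex.
From mathcomp Require Import boolp classical_sets reals.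
From mathcomp Require Import ring lra.
Import Order.TTheory GRing.Theory Num.Theory.
Local Open Scope ring_scope.
Local Open Scope complex_scope.

Set Implicit Arguments.
Unset Strict Implicit.

(** Every Hermitian 2x2 matrix is [al I + d.sigma] with [al] real and [d] in
  R^3; it is positive semidefinite iff [|d| <= al], and for [al >= 0] its
  operator norm is [al + |d|], both because [<v, (d.sigma) v>] ranges over
  [[-|d|, |d|]] on unit vectors.  Hence [||M1(x) + M2(y)|| = 1 + |x a + y b|/2]
  and the QRAC average is [1/2 + (|a + b| + |a - b|)/8], which exceeds [3/4]
  iff [|a + b| + |a - b| > 2].  This is Busch's incompatibility criterion: a
  joint POVM [G(x,y) = g_xy I + p_xy.sigma] gives [a + b = 2 (p_++ - p_--)] and
  [a - b = 2 (p_+- - p_-+)], so [|a + b| + |a - b| <= 2 sum g_xy = 2]; conversely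
  [G(x,y) = ((1 + x y k) I + (x a + y b).sigma)/4] with
  [k = (|a + b| - |a - b|)/2] is a joint POVM as soon as
  [|a + b| + |a - b| <= 2]. *)

Local Notation Re := (@complex.Re _).
Local Notation Im := (@complex.Im _).

Section ComplexParts.
Variable R : rcfType.
Implicit Types (x y : R[i]) (k a b : R).

Lemma complex_ext x y : Re x = Re y -> Im x = Im y -> x = y.
Proof. by case: x y => [? ?] [? ?] /= -> ->. Qed.

Lemma ReD x y : Re (x + y) = Re x + Re y. Proof. by case: x y => [? ?] [? ?]. Qed.
Lemma ImD x y : Im (x + y) = Im x + Im y. Proof. by case: x y => [? ?] [? ?]. Qed.
Lemma ReN x : Re (- x) = - Re x. Proof. by case: x. Qed.
Lemma ImN x : Im (- x) = - Im x. Proof. by case: x. Qed.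
Lemma ReM x y : Re (x * y) = Re x * Re y - Im x * Im y.
Proof. by case: x y => [? ?] [? ?]. Qed.
Lemma ImM x y : Im (x * y) = Re x * Im y + Im x * Re y.
Proof. by case: x y => [? ?] [? ?]. Qed.
Lemma ReJ x : Re x^* = Re x. Proof. by case: x. Qed.
Lemma ImJ x : Im x^* = - Im x. Proof. by case: x. Qed.
Lemma ReC k : Re k%:C = k. Proof. by []. Qed.
Lemma ImC k : Im k%:C = 0. Proof. by []. Qed.
Lemma Re0 : Re (0 : R[i]) = 0. Proof. by []. Qed.
Lemma Im0 : Im (0 : R[i]) = 0. Proof. by []. Qed.
Lemma Re1 : Re (1 : R[i]) = 1. Proof. by []. Qed.
Lemma Im1 : Im (1 : R[i]) = 0. Proof. by []. Qed.
Lemma ReComplex a b : Re (a +i* b) = a. Proof. by []. Qed.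
Lemma ImComplex a b : Im (a +i* b) = b. Proof. by []. Qed.

Lemma half_complex : (1 / 2 : R[i]) = (1 / 2 : R)%:C.
Proof. by rewrite rmorphM rmorph1 fmorphV rmorph_nat. Qed.

Definition ReImE := (ReComplex, ImComplex, ReD, ImD, ReN, ImN, ReM, ImM,
  ReJ, ImJ, ReC, ImC, Re0, Im0, Re1, Im1).

End ComplexParts.

Lemma ord2P (i : 'I_2) : i = ord0 \/ i = ord_max.
Proof. by case: i => [[|[|?]] ?]; [left; apply: val_inj|right; apply: val_inj|]. Qed.

Lemma big_ord2 (V : nmodType) (F : 'I_2 -> V) : \sum_i F i = F ord0 + F ord_max.
Proof. by rewrite !big_ord_recl big_ord0 addr0; congr (_ + F _); apply: val_inj. Qed.

Lemma big_ord3 (V : nmodType) (F : 'I_3 -> V) :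
  \sum_i F i = F ord0 + F (inord 1) + F (inord 2).
Proof.
rewrite !big_ord_recl big_ord0 addr0 addrA.
by congr (_ + F _ + F _); apply: val_inj; rewrite /= inordK.
Qed.

Ltac case_mx2 := apply/matrixP => i j;
  have [->|->] := ord2P i; have [->|->] := ord2P j; rewrite !mxE /=.

Section EuclideanR3.
Variable R : rcfType.
Implicit Types x y z k r : R.

Definition norm3 x y z : R := Num.sqrt (x ^+ 2 + y ^+ 2 + z ^+ 2).

Lemma sqr_sum3_ge0 x y z : 0 <= x ^+ 2 + y ^+ 2 + z ^+ 2.
Proof. by rewrite !addr_ge0 ?sqr_ge0. Qed.

Lemma norm3_ge0 x y z : 0 <= norm3 x y z.
Proof. exact: sqrtr_ge0. Qed.

Lemma sqr_norm3 x y z : norm3 x y z ^+ 2 = x ^+ 2 + y ^+ 2 + z ^+ 2.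
Proof. by rewrite sqr_sqrtr ?sqr_sum3_ge0. Qed.

Lemma norm3_le x y z r : 0 <= r -> (norm3 x y z <= r) = (x ^+ 2 + y ^+ 2 + z ^+ 2 <= r ^+ 2).
Proof. by move=> r0; rewrite -ler_sqr ?nnegrE ?norm3_ge0 // sqr_norm3. Qed.

Lemma norm3N x y z : norm3 (- x) (- y) (- z) = norm3 x y z.
Proof. by rewrite /norm3 !sqrrN. Qed.

Lemma norm3Mr x y z k : 0 <= k -> norm3 (x * k) (y * k) (z * k) = norm3 x y z * k.
Proof.
move=> k0; rewrite /norm3 !exprMn -!mulrDl sqrtrM ?sqr_sum3_ge0 //.
by rewrite sqrtr_sqr ger0_norm.
Qed.

Lemma dot3_le x1 x2 x3 y1 y2 y3 :
  `|x1 * y1 + x2 * y2 + x3 * y3| <= norm3 x1 x2 x3 * norm3 y1 y2 y3.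
Proof.
rewrite -ler_sqr ?nnegrE ?mulr_ge0 ?norm3_ge0 //.
rewrite -normrX ger0_norm ?sqr_ge0 // exprMn !sqr_norm3 -subr_ge0.
have -> : (x1 ^+ 2 + x2 ^+ 2 + x3 ^+ 2) * (y1 ^+ 2 + y2 ^+ 2 + y3 ^+ 2)
   - (x1 * y1 + x2 * y2 + x3 * y3) ^+ 2 =
  (x1 * y2 - x2 * y1) ^+ 2 + (x1 * y3 - x3 * y1) ^+ 2 + (x2 * y3 - x3 * y2) ^+ 2
  by ring.
exact: sqr_sum3_ge0.
Qed.

Lemma norm3B_le x1 x2 x3 y1 y2 y3 :
  norm3 (x1 - y1) (x2 - y2) (x3 - y3) <= norm3 x1 x2 x3 + norm3 y1 y2 y3.
Proof.
rewrite norm3_le ?addr_ge0 ?norm3_ge0 //.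
have := dot3_le x1 x2 x3 y1 y2 y3; rewrite ler_norml => /andP[dot_ge _].
have := sqr_norm3 x1 x2 x3; have := sqr_norm3 y1 y2 y3; nra.
Qed.

(** [sigma_form d1 d2 d3 x1 y1 x2 y2] is [<v, (d.sigma) v>] for
  [v = (x1 + i y1, x2 + i y2)]. *)
Definition sigma_form (d1 d2 d3 x1 y1 x2 y2 : R) : R :=
  2 * d1 * (x1 * x2 + y1 * y2) + 2 * d2 * (x1 * y2 - y1 * x2)
  + d3 * (x1 ^+ 2 + y1 ^+ 2 - x2 ^+ 2 - y2 ^+ 2).

Lemma sigma_formN d1 d2 d3 x1 y1 x2 y2 :
  sigma_form (- d1) (- d2) (- d3) x1 y1 x2 y2 = - sigma_form d1 d2 d3 x1 y1 x2 y2.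
Proof. by rewrite /sigma_form; ring. Qed.

(** Cauchy-Schwarz against the Bloch vector of [v], whose length is [|v|^2]. *)
Lemma sigma_form_le d1 d2 d3 x1 y1 x2 y2 :
  `|sigma_form d1 d2 d3 x1 y1 x2 y2|
    <= norm3 d1 d2 d3 * (x1 ^+ 2 + y1 ^+ 2 + x2 ^+ 2 + y2 ^+ 2).
Proof.
have := dot3_le d1 d2 d3 (2 * (x1 * x2 + y1 * y2)) (2 * (x1 * y2 - y1 * x2))
  (x1 ^+ 2 + y1 ^+ 2 - x2 ^+ 2 - y2 ^+ 2).
have -> : norm3 (2 * (x1 * x2 + y1 * y2)) (2 * (x1 * y2 - y1 * x2))
    (x1 ^+ 2 + y1 ^+ 2 - x2 ^+ 2 - y2 ^+ 2) = x1 ^+ 2 + y1 ^+ 2 + x2 ^+ 2 + y2 ^+ 2.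
  rewrite /norm3 -[X in _ = X]ger0_norm ?sqr_sum3_ge0 ?addr_ge0 ?sqr_ge0 //.
  by rewrite -sqrtr_sqr; congr Num.sqrt; ring.
by congr (`|_| <= _); rewrite /sigma_form; ring.
Qed.

(** The maximum is attained at an eigenvector of [d.sigma] for the eigenvalue [|d|]. *)
Lemma sigma_form_max d1 d2 d3 : exists x1 y1 x2 y2,
  x1 ^+ 2 + y1 ^+ 2 + x2 ^+ 2 + y2 ^+ 2 = 1
  /\ sigma_form d1 d2 d3 x1 y1 x2 y2 = norm3 d1 d2 d3.
Proof.
set r := norm3 d1 d2 d3.
have r2 : r ^+ 2 = d1 ^+ 2 + d2 ^+ 2 + d3 ^+ 2 by rewrite sqr_norm3.
have d3_le : `|d3| <= r.
  rewrite -ler_sqr ?nnegrE ?norm3_ge0 // -normrX ger0_norm ?sqr_ge0 // r2.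
  by rewrite lerDr addr_ge0 ?sqr_ge0.
have [rd3_0 | rd3_neq0] := eqVneq (r + d3) 0.
  exists 0, 0, 1, 0; split; first ring.
  by move: rd3_0; rewrite /sigma_form; lra.
have rd3_pos : 0 < r + d3.
  by rewrite lt0r rd3_neq0 /=; move: d3_le; rewrite ler_norml; lra.
have r_pos : 0 < r by move: d3_le rd3_pos; rewrite ler_norml; lra.
set s := 2 * r * (r + d3).
have s_pos : 0 < s by rewrite !mulr_gt0.
set t := (Num.sqrt s)^-1.
have t2 : t ^+ 2 = s^-1 by rewrite exprVn sqr_sqrtr // ltW.
have d12 : d1 ^+ 2 + d2 ^+ 2 = (r - d3) * (r + d3) by rewrite -[_ * _]subr_sqr r2; ring.
exists (t * (r + d3)), 0, (t * d1), (t * d2); split.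
  have -> : (t * (r + d3)) ^+ 2 + 0 ^+ 2 + (t * d1) ^+ 2 + (t * d2) ^+ 2
    = t ^+ 2 * ((r + d3) ^+ 2 + (d1 ^+ 2 + d2 ^+ 2)) by ring.
  by rewrite t2 d12 /s; field; rewrite !gt_eqF.
have -> : sigma_form d1 d2 d3 (t * (r + d3)) 0 (t * d1) (t * d2)
  = t ^+ 2 * (2 * (r + d3) * (d1 ^+ 2 + d2 ^+ 2) + d3 * ((r + d3) ^+ 2 - (d1 ^+ 2 + d2 ^+ 2))).
  by rewrite /sigma_form; ring.
by rewrite t2 d12 /s; field; rewrite !gt_eqF.
Qed.

End EuclideanR3.

Section BlochMatrices.
Variable R : realType.
Implicit Type A : 'M[R[i]]_2.

(** [al I + d1 sigma1 + d2 sigma2 + d3 sigma3], written out entrywise. *)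
Definition bloch_mx (al d1 d2 d3 : R) : 'M[R[i]]_2 :=
  \matrix_(i, j) if i == j then (if i == ord0 then (al + d3)%:C else (al - d3)%:C)
                 else if i == ord0 then d1 -i* d2 else d1 +i* d2.

Definition qubit (x1 y1 x2 y2 : R) : 'cV[R[i]]_2 :=
  \col_i (if i == ord0 then x1 +i* y1 else x2 +i* y2).

Lemma qubit_surj (v : 'cV[R[i]]_2) : exists x1 y1 x2 y2, v = qubit x1 y1 x2 y2.
Proof.
exists (Re (v ord0 ord0)), (Im (v ord0 ord0)), (Re (v ord_max ord0)), (Im (v ord_max ord0)).
apply/matrixP => i j; rewrite (ord1 j) !mxE.
by have [->|->] := ord2P i; case: (v _ _).
Qed.

Lemma cnorm2_qubit (x1 y1 x2 y2 : R) :
  cnorm2 (qubit x1 y1 x2 y2) = x1 ^+ 2 + y1 ^+ 2 + x2 ^+ 2 + y2 ^+ 2.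
Proof. by rewrite /cnorm2 big_ord2 !mxE /=; ring. Qed.

Lemma bloch_mxD (al d1 d2 d3 be e1 e2 e3 : R) :
  bloch_mx al d1 d2 d3 + bloch_mx be e1 e2 e3
  = bloch_mx (al + be) (d1 + e1) (d2 + e2) (d3 + e3).
Proof. by case_mx2; apply: complex_ext; rewrite !ReImE; ring. Qed.

Lemma bloch_mx1 : bloch_mx 1 0 0 0 = 1%:M.
Proof. by case_mx2; apply: complex_ext; rewrite !ReImE; ring. Qed.

Lemma bloch_mx_inj (al d1 d2 d3 be e1 e2 e3 : R) :
  bloch_mx al d1 d2 d3 = bloch_mx be e1 e2 e3 ->
  [/\ al = be, d1 = e1, d2 = e2 & d3 = e3].
Proof.
move=> eqA.
have entry i j := congr1 (fun A : 'M_2 => A i j) eqA.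
move: (congr1 Re (entry ord0 ord0)) (congr1 Re (entry ord_max ord_max))
  (congr1 Re (entry ord_max ord0)) (congr1 Im (entry ord_max ord0)).
by rewrite /bloch_mx !mxE /= => ? ? ? ?; split; lra.
Qed.

Lemma adj_bloch_mx (al d1 d2 d3 : R) : adj (bloch_mx al d1 d2 d3) = bloch_mx al d1 d2 d3.
Proof. by rewrite /adj; case_mx2; apply: complex_ext; rewrite !ReImE; ring. Qed.

Lemma hermitian_bloch_mx A : adj A = A -> exists al d1 d2 d3, A = bloch_mx al d1 d2 d3.
Proof.
move=> hermA.
have conjA i j : A i j = (A j i)^* by rewrite -{1}hermA !mxE.
have ImA i : Im (A i i) = 0 by have := congr1 Im (conjA i i); rewrite ImJ; lra.
exists ((Re (A ord0 ord0) + Re (A ord_max ord_max)) / 2), (Re (A ord_max ord0)),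
  (Im (A ord_max ord0)), ((Re (A ord0 ord0) - Re (A ord_max ord_max)) / 2).
case_mx2; apply: complex_ext; rewrite ?ReImE ?ImA //.
all: try by field.
all: by rewrite (conjA ord0 ord_max) ReImE.
Qed.

Lemma form_bloch_mx (al d1 d2 d3 x1 y1 x2 y2 : R) :
  (cadj (qubit x1 y1 x2 y2) *m bloch_mx al d1 d2 d3 *m qubit x1 y1 x2 y2) ord0 ord0
  = (al * (x1 ^+ 2 + y1 ^+ 2 + x2 ^+ 2 + y2 ^+ 2) + sigma_form d1 d2 d3 x1 y1 x2 y2)%:C.
Proof.
rewrite !mxE big_ord2 !mxE !big_ord2 !mxE /=.
by apply: complex_ext; rewrite !ReImE /sigma_form; ring.
Qed.

Lemma cnorm2_bloch_mx (al d1 d2 d3 x1 y1 x2 y2 : R) :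
  cnorm2 (bloch_mx al d1 d2 d3 *m qubit x1 y1 x2 y2)
  = (al ^+ 2 + norm3 d1 d2 d3 ^+ 2) * (x1 ^+ 2 + y1 ^+ 2 + x2 ^+ 2 + y2 ^+ 2)
    + 2 * al * sigma_form d1 d2 d3 x1 y1 x2 y2.
Proof.
rewrite /cnorm2 big_ord2 !mxE !big_ord2 !mxE /= sqr_norm3.
by rewrite /sigma_form; ring.
Qed.

Lemma psd_bloch_mxP (al d1 d2 d3 : R) : psd (bloch_mx al d1 d2 d3) <-> norm3 d1 d2 d3 <= al.
Proof.
split=> [[_ form_ge0] | d_le].
  have [x1 [y1 [x2 [y2 [unit_v form_v]]]]] := sigma_form_max (- d1) (- d2) (- d3).
  move: (form_ge0 (qubit x1 y1 x2 y2)) form_v.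
  by rewrite form_bloch_mx ler0c unit_v sigma_formN norm3N; lra.
split=> [|v]; first exact: adj_bloch_mx.
have [x1 [y1 [x2 [y2 ->]]]] := qubit_surj v.
rewrite form_bloch_mx ler0c.
have := sigma_form_le d1 d2 d3 x1 y1 x2 y2; rewrite ler_norml => /andP[form_ge _].
have : 0 <= x1 ^+ 2 + y1 ^+ 2 + x2 ^+ 2 + y2 ^+ 2 by rewrite !addr_ge0 ?sqr_ge0.
nra.
Qed.

Lemma psd_bloch A : psd A ->
  exists al d1 d2 d3, A = bloch_mx al d1 d2 d3 /\ norm3 d1 d2 d3 <= al.
Proof.
move=> psdA; have [al [d1 [d2 [d3 defA]]]] := hermitian_bloch_mx psdA.1.
by exists al, d1, d2, d3; split; last by rewrite -psd_bloch_mxP -defA.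
Qed.

Lemma opnorm_bloch_mx (al d1 d2 d3 : R) :
  0 <= al -> opnorm (bloch_mx al d1 d2 d3) = al + norm3 d1 d2 d3.
Proof.
move=> al_ge0; set r := norm3 d1 d2 d3.
have r_ge0 : 0 <= r by exact: norm3_ge0.
have sqrt_sqr : Num.sqrt ((al + r) ^+ 2) = al + r by rewrite sqrtr_sqr ger0_norm ?addr_ge0.
rewrite /opnorm; set E := (X in sup X).
have ub : ubound E (al + r).
  move=> _ [v /= unit_v <-]; move: unit_v.
  have [x1 [y1 [x2 [y2 ->]]]] := qubit_surj v.
  rewrite cnorm2_qubit cnorm2_bloch_mx => unit_v.
  rewrite unit_v -sqrt_sqr ler_sqrt ?sqr_ge0 //.
  have := sigma_form_le d1 d2 d3 x1 y1 x2 y2.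
  rewrite unit_v mulr1 ler_norml -/r => /andP[_ form_le]; nra.
have attained : E (al + r).
  have [x1 [y1 [x2 [y2 [unit_v form_v]]]]] := sigma_form_max d1 d2 d3.
  exists (qubit x1 y1 x2 y2); first by rewrite /= cnorm2_qubit.
  by rewrite cnorm2_bloch_mx unit_v form_v -/r -sqrt_sqr; congr Num.sqrt; ring.
apply/eqP; rewrite eq_le ge_sup //=; last by exists (al + r).
by apply: sup_upper_bound => //; split; [exists (al + r) | exists (al + r)].
Qed.

End BlochMatrices.

Section Dichotomic.
Variable R : realType.
Implicit Type v : 'cV[R]_3.

Lemma sqrt_rnorm2 v :
  Num.sqrt (rnorm2 v) = norm3 (v ord0 ord0) (v (inord 1) ord0) (v (inord 2) ord0).
Proof. by rewrite /rnorm2 big_ord3. Qed.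

Lemma dichotE v x : dichot v x = bloch_mx (1 / 2)
  (sgn R x * v ord0 ord0 / 2) (sgn R x * v (inord 1) ord0 / 2) (sgn R x * v (inord 2) ord0 / 2).
Proof.
rewrite /dichot /dot_sigma half_complex; case_mx2.
all: by apply: complex_ext; rewrite !ReImE ?inordK //=; field.
Qed.

End Dichotomic.

Section DichotomicPair.
Variable R : realType.
Variables a b : 'cV[R]_3.

Local Notation a1 := (a ord0 ord0).
Local Notation a2 := (a (inord 1) ord0).
Local Notation a3 := (a (inord 2) ord0).
Local Notation b1 := (b ord0 ord0).
Local Notation b2 := (b (inord 1) ord0).
Local Notation b3 := (b (inord 2) ord0).
Local Notation sgn := (sgn R).
Local Notation U := (Num.sqrt (rnorm2 (a + b))).
Local Notation W := (Num.sqrt (rnorm2 (a - b))).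

Lemma norm3_sgn x y :
  norm3 (sgn x * a1 + sgn y * b1) (sgn x * a2 + sgn y * b2) (sgn x * a3 + sgn y * b3)
  = if x == y then U else W.
Proof.
rewrite !sqrt_rnorm2 !mxE.
case: x; case: y; rewrite /= /Defs.sgn ?mul1r ?mulN1r // -[RHS]norm3N.
  by rewrite !opprB ![- _ + _]addrC.
by rewrite !opprD.
Qed.

Lemma opnorm_dichotD x y :
  opnorm (dichot a x + dichot b y) = 1 + (if x == y then U else W) / 2.
Proof.
rewrite !dichotE bloch_mxD opnorm_bloch_mx; last lra.
rewrite -norm3_sgn -norm3Mr; last lra.
by congr (_ + norm3 _ _ _); field.
Qed.

Lemma compatible_dichot_le : compatible (dichot a) (dichot b) -> U + W <= 2.
Proof.
case=> G [[G_psd _] [marg1 marg2]].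
move: (marg1 true) (marg1 false) (marg2 true) (marg2 false); rewrite !big_bool /=.
have [gTT [pTT1 [pTT2 [pTT3 [-> TT_le]]]]] := psd_bloch (G_psd (true, true)).
have [gTF [pTF1 [pTF2 [pTF3 [-> TF_le]]]]] := psd_bloch (G_psd (true, false)).
have [gFT [pFT1 [pFT2 [pFT3 [-> FT_le]]]]] := psd_bloch (G_psd (false, true)).
have [gFF [pFF1 [pFF2 [pFF3 [-> FF_le]]]]] := psd_bloch (G_psd (false, false)).
rewrite !bloch_mxD !dichotE /Defs.sgn.
move=> /bloch_mx_inj[? ? ? ?] /bloch_mx_inj[? ? ? ?] /bloch_mx_inj[? ? ? ?] /bloch_mx_inj[? ? ? ?].
have triangle c1 c2 c3 p1 p2 p3 q1 q2 q3 :
    c1 = (p1 - q1) * 2 -> c2 = (p2 - q2) * 2 -> c3 = (p3 - q3) * 2 ->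
    norm3 c1 c2 c3 <= (norm3 p1 p2 p3 + norm3 q1 q2 q3) * 2.
  by move=> -> -> ->; rewrite norm3Mr // ler_pM2r // norm3B_le.
have U_le : U <= (norm3 pTT1 pTT2 pTT3 + norm3 pFF1 pFF2 pFF3) * 2.
  by rewrite sqrt_rnorm2 !mxE; apply: triangle; lra.
have W_le : W <= (norm3 pTF1 pTF2 pTF3 + norm3 pFT1 pFT2 pFT3) * 2.
  by rewrite sqrt_rnorm2 !mxE; apply: triangle; lra.
lra.
Qed.

Lemma dichot_compatible : U + W <= 2 -> compatible (dichot a) (dichot b).
Proof.
move=> UW_le; pose k := (U - W) / 2.
pose G x y := bloch_mx ((1 + sgn x * sgn y * k) / 4) ((sgn x * a1 + sgn y * b1) / 4)
  ((sgn x * a2 + sgn y * b2) / 4) ((sgn x * a3 + sgn y * b3) / 4).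
exists (fun xy => G xy.1 xy.2); split; [split | split].
- case=> x y; rewrite psd_bloch_mxP norm3Mr ?norm3_sgn; last lra.
  by case: x; case: y; rewrite /= /Defs.sgn /k; lra.
- rewrite -(pair_bigA _ G) /= !big_bool /G /= !bloch_mxD -bloch_mx1 /Defs.sgn /=.
  by congr bloch_mx; field.
- by case; rewrite big_bool /G /= bloch_mxD dichotE /Defs.sgn /=; congr bloch_mx; field.
- by case; rewrite big_bool /G /= bloch_mxD dichotE /Defs.sgn /=; congr bloch_mx; field.
Qed.

Lemma compatible_dichotP : compatible (dichot a) (dichot b) <-> U + W <= 2.
Proof. by split; [exact: compatible_dichot_le | exact: dichot_compatible]. Qed.

End DichotomicPair.

Lemma qrac_averageP (R : realFieldType) (N : bool -> bool -> R) (U W : R) :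
  (forall x y, N x y = 1 + (if x == y then U else W) / 2) ->
  3 / 4 < 1 / 8 * (\sum_(x : bool) \sum_(y : bool) N x y) <-> 2 < U + W.
Proof. by move=> NE; rewrite !big_bool !NE /=; split; lra. Qed.

Theorem proposition2 (R : realType) (a b : 'cV[R]_3) :
  rnorm2 a <= 1 -> rnorm2 b <= 1 ->
  (~ compatible (dichot a) (dichot b) <->
   (1 / 8) * (\sum_(x : bool) \sum_(y : bool)
                opnorm (dichot a x + dichot b y)) > 3 / 4).
Proof.
move=> _ _.
have busch := compatible_dichotP a b.
have average := qrac_averageP (opnorm_dichotD a b).
split=> [incompatible | /average UW_gt /busch UW_le]; last lra.
by apply/average; rewrite ltNge; apply/negP => /busch.
Qed.
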